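(* Let $\beta>0$, $\gamma>0$, $T$ a positive integer, and $(\eta_t)_{t\ge1}$ positive step sizes. Then: (i) If $\eta_t=C\le2/(\beta+\gamma)$ for all $t$, then $\sum_{t=1}^T\eta_t\prod_{j=t+1}^T(1-\eta_j\gamma)=\frac{1-(1-C\gamma)^T}{\gamma}$. (ii) If $\eta_t=C/t\le2/(\beta+\gamma)$ for $t\ge1+\lceil\beta/\gamma\rceil$ for some $C\ge2/\gamma$, and $\eta_t=C'/t\le2/(\beta+\gamma)$ for $t\le\lceil\beta/\gamma\rceil$ for some $C'<2/(\gamma+\beta)$, then $\sum_{t=1}^T\eta_t\prod_{j=t+1}^T\left(1-\frac{\eta_j\gamma}{2}\right)\le C\log\left(e^2\lceil\beta/\gamma\rceil\right)$. (iii) If $\eta_t\le C/t<2/\beta$ for all $t$, then $\sum_{t=1}^T\eta_t\prod_{j=t+1}^T(1+\beta\eta_j)^2\le C e^{2C\beta}T^{2C\beta}\min\left\{1+\frac1{2C\beta},\ \log(eT)\right\}$. *)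

From HB Require Import structures.
From mathcomp Require Import all_boot all_order all_algebra.
From mathcomp Require Import all_classical all_reals all_analysis.
Set Implicit Arguments. Unset Strict Implicit. Unset Printing Implicit Defensive.
Import Order.TTheory GRing.Theory Num.Theory.
Local Open Scope ring_scope.

Definition ceil_nat {R : realType} (x : R) : nat := `|Num.ceil x|%N.

Definition wsum {R : realType} (eta : nat -> R) (phi : R -> R) (T : nat) : R :=
  \sum_(1 <= t < T.+1) (eta t * \prod_(t.+1 <= j < T.+1) phi (eta j)).

From HB Require Import structures.
From mathcomp Require Import all_boot all_order all_algebra.
From mathcomp Require Import all_classical all_reals all_analysis.
From mathcomp Require Import ring lra zify.
Import Order.TTheory GRing.Theory Num.Theory.
Local Open Scope ring_scope.

(* All three bounds propagate an invariant along the recursion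
   [wsum eta phi T.+1 = wsum eta phi T * phi (eta T.+1) + eta T.+1].
   For a constant step the recursion is linear and solves in closed form.
   For steps at most [C/t] and factors [phi (eta t) <= r t] with [r t >= 1], the sum
   stays below [C H_T prod_t r t], [H_T] the harmonic number; for [r t = (1 + b/t)^2]
   it also stays below [C/(2b) (prod_t r t - 1)], and
   [prod_t r t <= exp (2 b H_T) <= e^(2b) T^(2b)] since [H_T <= 1 + ln T]: this is (iii).
   In (ii) the factors are at most 1 up to [k = ceil (beta/gamma)], so the sum is at most
   [C H_k <= C (1 + ln k)]; after [k], [C gamma >= 2] bounds the factor by [1 - 1/t],
   which makes the new sum at most a convex combination of the old one and [C], so the
   bound [C (2 + ln k)] persists. *)

Section WeightedSums.
Variable R : realType.
Implicit Types (eta : nat -> R) (phi : R -> R) (b c M : R).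

Lemma wsum0 eta phi : wsum eta phi 0 = 0.
Proof. by rewrite /wsum big_geq. Qed.

Lemma wsumS eta phi T :
  wsum eta phi T.+1 = wsum eta phi T * phi (eta T.+1) + eta T.+1.
Proof.
rewrite /wsum big_nat_recr //= [X in eta T.+1 * X]big_geq // mulr1.
congr (_ + _); rewrite big_distrl /= !big_nat; apply: eq_bigr => t /andP[_ ht].
by rewrite big_nat_recr //= mulrA.
Qed.

Definition harmonic n : R := \sum_(1 <= t < n.+1) t%:R^-1.

Lemma harmonic0 : harmonic 0 = 0.
Proof. by rewrite /harmonic big_geq. Qed.

Lemma harmonicS n : harmonic n.+1 = harmonic n + n.+1%:R^-1.
Proof. by rewrite /harmonic big_nat_recr. Qed.

Lemma harmonic_ge0 n : 0 <= harmonic n.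
Proof. by rewrite /harmonic big_nat; apply: sumr_ge0 => t _; rewrite invr_ge0. Qed.

Lemma harmonic_le m n : (m <= n)%N -> harmonic m <= harmonic n.
Proof.
move=> le_mn; rewrite /harmonic [X in _ <= X](big_cat_nat _ (n := m.+1)) //= lerDl.
by rewrite big_nat; apply: sumr_ge0 => t _; rewrite invr_ge0.
Qed.

Lemma ln_natS_ge m : (0 < m)%N -> ln (m%:R : R) + m.+1%:R^-1 <= ln m.+1%:R.
Proof.
move=> m_gt0; set x : R := m.+1%:R^-1.
have m_eq : m%:R = m.+1%:R * (1 - x).
  by rewrite /x mulrBr mulr1 mulfV ?pnatr_eq0 // -natr1 addrK.
have : (m%:R : R) <= m.+1%:R * expR (- x).
  by rewrite m_eq ler_pM2l ?ltr0n //; have := expR_ge1Dx (- x); lra.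
rewrite -ler_ln ?posrE ?mulr_gt0 ?expR_gt0 ?ltr0n //.
rewrite lnM ?posrE ?expR_gt0 ?ltr0n // expRK; lra.
Qed.

Lemma harmonic_le_ln n : harmonic n <= 1 + ln n%:R.
Proof.
elim: n => [|[|n] IH]; first by rewrite harmonic0 ln0 // addr0.
  by rewrite harmonicS harmonic0 ln1 invr1 add0r addr0.
rewrite harmonicS; apply: le_trans (lerD IH (lexx _)) _.
by rewrite -addrA lerD2l ln_natS_ge.
Qed.

Lemma prod_ge1 (r : nat -> R) m n :
  (forall j, (m <= j < n)%N -> 1 <= r j) -> 1 <= \prod_(m <= j < n) r j.
Proof.
by move=> r_ge1; rewrite big_nat; apply: (big_ind (>= 1)) => //; apply: mulr_ege1.
Qed.

Lemma wsum_le_harmonic_prod eta phi (r : nat -> R) c n : 0 <= c ->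
  (forall t, (0 < t <= n)%N -> eta t <= c / t%:R) ->
  (forall t, (0 < t <= n)%N -> 0 <= phi (eta t) <= r t) ->
  (forall t, (0 < t <= n)%N -> 1 <= r t) ->
  wsum eta phi n <= c * harmonic n * \prod_(1 <= j < n.+1) r j.
Proof.
move=> c_ge0; elim: n => [|n IH] eta_le phi_le r_ge1.
  by rewrite wsum0 harmonic0 mulr0 mul0r.
have widen t : (0 < t <= n)%N -> (0 < t <= n.+1)%N by lia.
have last_in : (0 < n.+1 <= n.+1)%N by rewrite leqnn.
have /andP[phi_ge0 phi_ler] := phi_le n.+1 last_in.
set P := \prod_(1 <= j < n.+1) r j.
have P_ge1 : 1 <= P by apply: prod_ge1 => j j_lt; apply: r_ge1; lia.
have Pr_ge1 : 1 <= P * r n.+1 := mulr_ege1 P_ge1 (r_ge1 _ last_in).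
have IHn : wsum eta phi n <= c * harmonic n * P.
  by apply: IH => t /widen; [apply: eta_le | apply: phi_le | apply: r_ge1].
rewrite wsumS harmonicS big_nat_recr //= -/P.
have -> : c * (harmonic n + n.+1%:R^-1) * (P * r n.+1)
    = c * harmonic n * P * r n.+1 + c / n.+1%:R * (P * r n.+1) by ring.
apply: lerD.
  have cHP_ge0 : 0 <= c * harmonic n * P.
    by rewrite !mulr_ge0 ?harmonic_ge0 // (le_trans ler01).
  exact: le_trans (ler_wpM2r phi_ge0 IHn) (ler_wpM2l cHP_ge0 phi_ler).
by apply: le_trans (eta_le _ last_in) (ler_peMr _ Pr_ge1); rewrite divr_ge0.
Qed.

Lemma wsum_le_invariant eta phi M k n : (k <= n)%N -> 0 <= M ->
  wsum eta phi k <= M ->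
  (forall t, (k < t <= n)%N -> eta t <= M / t%:R) ->
  (forall t, (k < t <= n)%N -> 0 <= phi (eta t) <= 1 - t%:R^-1) ->
  wsum eta phi n <= M.
Proof.
move=> + M_ge0 Wk_le; elim: n => [|n IH]; first by rewrite leqn0 => /eqP <-.
rewrite leq_eqVlt ltnS => /orP[/eqP <- //|le_kn] eta_le phi_le.
have widen t : (k < t <= n)%N -> (k < t <= n.+1)%N by lia.
have last_in : (k < n.+1 <= n.+1)%N by rewrite ltnS le_kn leqnn.
have IHn : wsum eta phi n <= M.
  by apply: IH => // t /widen; [apply: eta_le | apply: phi_le].
have /andP[phi_ge0 phi_le1] := phi_le n.+1 last_in.
rewrite wsumS [leRHS](_ : M = M * (1 - n.+1%:R^-1) + M / n.+1%:R); last by ring.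
apply: lerD (eta_le _ last_in).
exact: le_trans (ler_wpM2r phi_ge0 IHn) (ler_wpM2l M_ge0 phi_le1).
Qed.

Lemma sqr_1Ddiv_ge1 b (t : nat) : 0 <= b -> 1 <= (1 + b / t%:R) ^+ 2.
Proof. by move=> b_ge0; rewrite exprn_ege1 // lerDl divr_ge0. Qed.

Lemma wsum_le_prod_sub1 eta phi b c n : 0 < b -> 0 <= c ->
  (forall t, (0 < t <= n)%N -> eta t <= c / t%:R) ->
  (forall t, (0 < t <= n)%N -> 0 <= phi (eta t) <= (1 + b / t%:R) ^+ 2) ->
  wsum eta phi n <= c / (2 * b) * (\prod_(1 <= j < n.+1) (1 + b / j%:R) ^+ 2 - 1).
Proof.
move=> b_gt0 c_ge0; elim: n => [|n IH] eta_le phi_le.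
  by rewrite wsum0 big_geq // subrr mulr0.
have widen t : (0 < t <= n)%N -> (0 < t <= n.+1)%N by lia.
have last_in : (0 < n.+1 <= n.+1)%N by rewrite leqnn.
have IHn : wsum eta phi n
    <= c / (2 * b) * (\prod_(1 <= j < n.+1) (1 + b / j%:R) ^+ 2 - 1).
  by apply: IH => t /widen; [apply: eta_le | apply: phi_le].
have /andP[phi_ge0 phi_ler] := phi_le n.+1 last_in.
set K := c / (2 * b) in IHn *; set P := \prod_(1 <= j < n.+1) _ in IHn *.
rewrite wsumS big_nat_recr //= -/P; set x := b / n.+1%:R in phi_ler *.
have K_ge0 : 0 <= K by rewrite divr_ge0 // mulr_ge0 // ltW.
have P_ge1 : 1 <= P by apply: prod_ge1 => j _; apply/sqr_1Ddiv_ge1/ltW.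
(* [c / t = K * 2x] and [(1 + x)^2 = 1 + 2x + x^2]: the step gains exactly [K x^2]. *)
have -> : K * (P * (1 + x) ^+ 2 - 1)
    = K * (P - 1) * (1 + x) ^+ 2 + c / n.+1%:R + K * x ^+ 2.
  by rewrite /K /x; field; rewrite addrC natr1 pnatr_eq0 lt0r_neq0.
apply: ler_wpDr; first by rewrite mulr_ge0 ?sqr_ge0.
apply: lerD (eta_le _ last_in).
apply: le_trans (ler_wpM2r phi_ge0 IHn) (ler_wpM2l _ phi_ler).
by rewrite mulr_ge0 // subr_ge0.
Qed.

Lemma prod_sqr_le_expR b n : 0 <= b ->
  \prod_(1 <= j < n.+1) (1 + b / j%:R) ^+ 2 <= expR (2 * b * harmonic n).
Proof.
move=> b_ge0; elim: n => [|n IH]; first by rewrite big_geq // harmonic0 mulr0 expR0.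
rewrite big_nat_recr //= harmonicS mulrDr expRD.
have x_ge0 : 0 <= b / n.+1%:R by rewrite divr_ge0.
apply: ler_pM => //.
- by rewrite big_nat prodr_ge0 // => j _; apply: sqr_ge0.
- exact: sqr_ge0.
- rewrite -mulrA mulr_natl mulr2n expRD expr2.
  by apply: ler_pM; rewrite ?addr_ge0 // expR_ge1Dx.
Qed.

Lemma prod_sqr_le_powR b n : 0 <= b -> (0 < n)%N ->
  \prod_(1 <= j < n.+1) (1 + b / j%:R) ^+ 2 <= expR (2 * b) * n%:R `^ (2 * b).
Proof.
move=> b_ge0 n_gt0; apply: le_trans (prod_sqr_le_expR b n b_ge0) _.
rewrite /powR ifF ?pnatr_eq0 ?gtn_eqF // -expRD ler_expR -[X in X + _]mulr1 -mulrDr.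
by rewrite ler_wpM2l ?harmonic_le_ln // mulr_ge0.
Qed.

Lemma wsum_const_step eta (C g : R) T : g != 0 ->
  (forall t, (0 < t)%N -> eta t = C) ->
  wsum eta (fun x => 1 - x * g) T = (1 - (1 - C * g) ^+ T) / g.
Proof.
move=> g_neq0 etaC; elim: T => [|T IH]; first by rewrite wsum0 expr0 subrr mul0r.
by rewrite wsumS IH etaC // exprS; field.
Qed.

Lemma wsum_halved_le_ln eta (g C : R) (k T : nat) :
  0 < g -> (0 < k)%N -> 2 / g <= C ->
  (forall t, (0 < t)%N -> 0 <= eta t <= 2 / g) ->
  (forall t, (0 < t <= k)%N -> eta t <= C / t%:R) ->
  (forall t, (k < t)%N -> eta t = C / t%:R) ->
  wsum eta (fun x => 1 - x * g / 2) T <= C * ln (expR 2 * k%:R).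
Proof.
move=> g_gt0 k_gt0 C_ge eta_bd eta_early eta_late.
have C_ge0 : 0 <= C by apply: le_trans C_ge; rewrite divr_ge0 // ltW.
have Cg_ge2 : 2 <= C * g by rewrite -ler_pdivrMr.
have lnk_ge0 : 0 <= ln (k%:R : R) by rewrite ln_ge0 // ler1n.
have C_le : C <= C * (2 + ln k%:R) by rewrite ler_peMr //; lra.
have phi_bd t : (0 < t)%N -> 0 <= 1 - eta t * g / 2 <= 1.
  move=> /eta_bd /andP[eta_ge0]; rewrite ler_pdivlMr // => eta_le.
  have : 0 <= eta t * g by rewrite mulr_ge0 // ltW.
  by move=> etag_ge0; apply/andP; split; lra.
rewrite lnM ?posrE ?expR_gt0 ?ltr0n // expRK.
apply: (@wsum_le_invariant _ _ _ (minn T k)); first exact: geq_minl.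
- by rewrite mulr_ge0 //; lra.
- apply: le_trans (wsum_le_harmonic_prod _ _ (fun=> 1) _ _ C_ge0 _ _ _) _.
  + by move=> t t_le; apply: eta_early; lia.
  + by move=> t /andP[t_gt0 _]; apply: phi_bd.
  + by [].
  rewrite big1_eq mulr1 ler_wpM2l //.
  apply: le_trans (harmonic_le _ _ (geq_minr T k)) _.
  by apply: le_trans (harmonic_le_ln k) _; rewrite lerD2r ler1n.
- move=> t t_in; rewrite eta_late; last by lia.
  by rewrite ler_wpM2r // invr_ge0.
- move=> t t_in; have t_gt0 : (0 < t)%N by lia.
  have /andP[phi_ge0 _] := phi_bd t t_gt0; rewrite phi_ge0 /=.
  rewrite eta_late; last by lia.
  rewrite lerD2l lerN2 [X in _ <= X](_ : _ = t%:R^-1 * (C * g / 2)); last by ring.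
  by rewrite ler_peMr ?invr_ge0 //; lra.
Qed.

Lemma wsum_sqr_growth_le eta (beta C : R) T :
  0 < beta -> 0 < C -> (0 < T)%N ->
  (forall t, (0 < t)%N -> 0 <= eta t <= C / t%:R) ->
  wsum eta (fun x => (1 + beta * x) ^+ 2) T
    <= C * expR (2 * C * beta) * T%:R `^ (2 * C * beta)
       * Num.min (1 + 1 / (2 * C * beta)) (ln (expR 1 * T%:R)).
Proof.
move=> beta_gt0 C_gt0 T_gt0 eta_bd.
rewrite -(mulrA 2); set b := C * beta; have b_gt0 : 0 < b by rewrite mulr_gt0.
set P := \prod_(1 <= j < T.+1) (1 + b / j%:R) ^+ 2.
set E := expR (2 * b) * T%:R `^ (2 * b).
have P_le : P <= E := prod_sqr_le_powR _ _ (ltW b_gt0) T_gt0.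
have P_ge1 : 1 <= P by apply: prod_ge1 => j _; apply/sqr_1Ddiv_ge1/ltW.
have CE_ge0 : 0 <= C * E.
  by rewrite mulr_ge0 ?(le_trans (le_trans ler01 P_ge1) P_le) // ltW.
have eta_le t : (0 < t <= T)%N -> eta t <= C / t%:R.
  by case/andP => /eta_bd /andP[].
have phi_le t : (0 < t <= T)%N -> 0 <= (1 + beta * eta t) ^+ 2 <= (1 + b / t%:R) ^+ 2.
  case/andP => /eta_bd /andP[eta_ge0 eta_leC] _; rewrite sqr_ge0 /= !expr2.
  have betaeta_ge0 : 0 <= 1 + beta * eta t by rewrite addr_ge0 // mulr_ge0 // ltW.
  have betaeta_le : 1 + beta * eta t <= 1 + b / t%:R.
    by rewrite lerD2l /b [C * beta]mulrC -mulrA ler_pM2l.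
  by apply: ler_pM.
rewrite -(mulrA C) -/E minr_pMr // le_min; apply/andP; split.
- apply: le_trans (wsum_le_prod_sub1 _ _ _ _ _ b_gt0 (ltW C_gt0) eta_le phi_le) _.
  rewrite [leRHS](_ : _ = C * E + C / (2 * b) * E); last by ring.
  apply: ler_wpDl CE_ge0 _; apply: ler_wpM2l.
    by rewrite divr_ge0 ?mulr_ge0 // ltW.
  by apply: le_trans _ P_le; rewrite gerDl lerN10.
- apply: le_trans (wsum_le_harmonic_prod _ _ _ _ _ (ltW C_gt0) eta_le phi_le _) _.
    by move=> t _; apply/sqr_1Ddiv_ge1/ltW.
  rewrite lnM ?posrE ?expR_gt0 ?ltr0n // expRK [leRHS]mulrAC -/P.
  apply: ler_pM => //.
  + by rewrite mulr_ge0 ?harmonic_ge0 // ltW.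
  + exact: le_trans ler01 P_ge1.
  + by rewrite ler_pM2l // harmonic_le_ln.
Qed.

End WeightedSums.

Theorem lemma16 (R : realType) (beta gamma : R) (T : nat) (eta : nat -> R)
  (hbeta : 0 < beta) (hgamma : 0 < gamma) (hT : (0 < T)%N)
  (heta : forall t : nat, (1 <= t)%N -> 0 < eta t) :
  (* (i) constant step size *)
  (forall C : R,
     (forall t : nat, (1 <= t)%N -> eta t = C) ->
     C <= 2 / (beta + gamma) ->
     wsum eta (fun x => 1 - x * gamma) T = (1 - (1 - C * gamma) ^+ T) / gamma) /\
  (* (ii) step size C/t after ceil(beta/gamma), C'/t before *)
  (forall C C' : R,
     2 / gamma <= C ->
     C' < 2 / (gamma + beta) ->
     (forall t : nat, (1 + ceil_nat (beta / gamma) <= t)%N ->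
        eta t = C / t%:R /\ C / t%:R <= 2 / (beta + gamma)) ->
     (forall t : nat, (1 <= t)%N -> (t <= ceil_nat (beta / gamma))%N ->
        eta t = C' / t%:R /\ C' / t%:R <= 2 / (beta + gamma)) ->
     wsum eta (fun x => 1 - x * gamma / 2) T
       <= C * ln (expR 2 * (ceil_nat (beta / gamma))%:R)) /\
  (* (iii) step size at most C/t < 2/beta *)
  (forall C : R,
     (forall t : nat, (1 <= t)%N -> eta t <= C / t%:R /\ C / t%:R < 2 / beta) ->
     wsum eta (fun x => (1 + beta * x) ^+ 2) T
       <= C * expR (2 * C * beta) * (T%:R `^ (2 * C * beta))
          * Num.min (1 + 1 / (2 * C * beta)) (ln (expR 1 * T%:R))).
Proof.
set k := ceil_nat (beta / gamma).
have k_gt0 : (0 < k)%N.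
  by rewrite absz_gt0 lt0r_neq0 // ceil_gt0 // divr_gt0.
have step_le : 2 / (beta + gamma) <= 2 / gamma.
  by rewrite ler_pM2l // lef_pV2 ?posrE ?addr_gt0 // lerDr ltW.
split; [|split].
- by move=> C etaC _; apply: wsum_const_step; rewrite ?lt0r_neq0.
- move=> C C' C_ge C'_lt eta_late eta_early.
  have C'_le : C' <= C.
    by rewrite addrC in C'_lt; apply: le_trans (ltW C'_lt) (le_trans step_le C_ge).
  apply: wsum_halved_le_ln hgamma k_gt0 C_ge _ _ _ => t.
  + move=> t_gt0; rewrite ltW ?heta //=; apply: le_trans step_le.
    by case: (leqP t k) => [/(eta_early t t_gt0)|/eta_late] [-> ->].
  + by case/andP=> t_gt0 /(eta_early t t_gt0) [-> _]; rewrite ler_wpM2r ?invr_ge0.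
  + by move=> /eta_late [].
- move=> C eta_le.
  have C_gt0 : 0 < C.
    by have [+ _] := eta_le 1%N isT; rewrite divr1; apply: lt_le_trans (heta 1%N isT).
  apply: wsum_sqr_growth_le hbeta C_gt0 hT _ => t t_gt0.
  by rewrite ltW ?heta //= (eta_le t t_gt0).1.
Qed.
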